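(* Let $\vartheta$ be a semi-compatible random substitution on $\mathcal A=\{a_1,\dots,a_n\}$ with substitution matrix $M$. Then for all integers $1\leqslant k<m$, \[ \bm q_k^\intercal M^{m-k}\;\leqslant\;\bm q_m^\intercal\;\leqslant\;\bm q_k^\intercal M^{m-k}+\bm q_{m-k}^\intercal \] component-wise.
   Context: Let $\mathcal A=\{a_1,\dots,a_n\}$ be a finite alphabet, $\mathcal A^+$ the set of finite non-empty words over $\mathcal A$, and $\mathcal F(\mathcal A^+)$ the set of finite non-empty subsets of $\mathcal A^+$. For $A,B\in\mathcal F(\mathcal A^+)$ put $AB=\{uv: u\in A, v\in B\}$. A random substitution is a map $\vartheta:\mathcal A\to\mathcal F(\mathcal A^+)$, extended to words by $\vartheta(u_1\cdots u_m)=\vartheta(u_1)\cdots\vartheta(u_m)$ and to sets by $\vartheta(A)=\bigcup_{u\in A}\vartheta(u)$; powers $\vartheta^m$ are compositions. $|u|_a$ denotes the number of occurrences of the letter $a$ in $u$ and $\Phi(u)=(|u|_{a_1},\dots,|u|_{a_n})^\intercal$. $\vartheta$ is semi-compatible if for every $a\in\mathcal A$ all words in $\vartheta(a)$ have the same Abelianisation $\Phi$. The substitution matrix is $M_{ij}=|u|_{a_i}$ for any $u\in\vartheta(a_j)$. Set $q_{m,i}=\log(\#\vartheta^m(a_i))$ and $\bm q_m=(q_{m,1},\dots,q_{m,n})^\intercal$. *)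

From Stdlib Require Import Reals.
From mathcomp Require Import all_boot.
Set Implicit Arguments. Unset Strict Implicit. Unset Printing Implicit Defensive.

(* Alphabet A = {a_1,...,a_n} is 'I_n; words are seq 'I_n.
   A finite set of words is represented by a list (membership = set),
   its cardinality is the number of distinct entries. *)
Definition word (n : nat) := seq 'I_n.

Definition rsubst (n : nat) := 'I_n -> seq (word n).

Definition is_random_substitution n (theta : rsubst n) : Prop :=
  forall a : 'I_n, theta a != [::] /\ (forall u, u \in theta a -> u != [::]).

Definition set_prod n (A B : seq (word n)) : seq (word n) :=
  [seq u ++ v | u <- A, v <- B].

Definition subst_word n (theta : rsubst n) (u : word n) : seq (word n) :=
  foldr (fun a acc => set_prod (theta a) acc) [:: [::]] u.

Definition subst_set n (theta : rsubst n) (A : seq (word n)) : seq (word n) :=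
  flatten [seq subst_word theta u | u <- A].

Definition subst_pow n (theta : rsubst n) (m : nat) (a : 'I_n) : seq (word n) :=
  iter m (subst_set theta) [:: [:: a]].

Definition card_pow n (theta : rsubst n) (m : nat) (a : 'I_n) : nat :=
  size (undup (subst_pow theta m a)).

Definition abel n (u : word n) : 'I_n -> nat := fun b => count_mem b u.

Definition semi_compatible n (theta : rsubst n) : Prop :=
  forall a : 'I_n, forall u v, u \in theta a -> v \in theta a ->
    forall b : 'I_n, abel u b = abel v b.

(* substitution matrix M_ij = |u|_{a_i} for any u in theta(a_j)
   (we take the first listed word) *)
Definition subst_matrix n (theta : rsubst n) : 'I_n -> 'I_n -> nat :=
  fun i j => abel (head [::] (theta j)) i.

Definition nmat_mul n (A B : 'I_n -> 'I_n -> nat) : 'I_n -> 'I_n -> nat :=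
  fun i j => \sum_(l < n) A i l * B l j.

Definition nmat_id n : 'I_n -> 'I_n -> nat := fun i j => nat_of_bool (i == j).

Fixpoint nmat_pow n (A : 'I_n -> 'I_n -> nat) (k : nat) : 'I_n -> 'I_n -> nat :=
  match k with
  | 0 => @nmat_id n
  | k'.+1 => nmat_mul (nmat_pow A k') A
  end.

Definition q n (theta : rsubst n) (m : nat) (i : 'I_n) : R :=
  ln (INR (card_pow theta m i)).

Definition qM n (theta : rsubst n) (k p : nat) (j : 'I_n) : R :=
  \big[Rplus/R0]_(i < n) (Rmult (q theta k i) (INR (nmat_pow (subst_matrix theta) p i j))).

From Stdlib Require Import Reals.
From mathcomp Require Import all_boot.
Set Implicit Arguments. Unset Strict Implicit. Unset Printing Implicit Defensive.

(* theta^m(a) = theta^k(theta^(m-k)(a)) is the union of the sets theta^k(v) over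
   v in theta^(m-k)(a).  By semi-compatibility all words of theta^k(b) have the
   same length, so concatenation is injective on theta^k(v_1)...theta^k(v_r) and
   #theta^k(v) = prod_b (#theta^k(b))^|v|_b.  Since moreover |v|_b = (M^(m-k))_(b,a)
   for every v in theta^(m-k)(a), this number W does not depend on v, and
   log W = (q_k^T M^(m-k))_a.  Hence W <= #theta^m(a) <= #theta^(m-k)(a) * W,
   and taking logarithms gives both bounds. *)

Section WordSets.
Variable n : nat.
Implicit Types (A B C : seq (word n)) (phi theta : rsubst n) (u v w : word n).

Lemma mem_set_prod A B w :
  (w \in set_prod A B) <-> exists u v, [/\ u \in A, v \in B & w = u ++ v].
Proof.
split; first by case/allpairsP => [[u v] /= [Hu Hv ->]]; exists u, v.
by case=> u [v [Hu Hv ->]]; apply/allpairsP; exists (u, v).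
Qed.

Lemma eq_set_prod A A' B B' :
  A =i A' -> B =i B' -> set_prod A B =i set_prod A' B'.
Proof.
move=> eqA eqB w; apply/idP/idP => /mem_set_prod [u [v [Hu Hv ->]]];
  apply/mem_set_prod; exists u, v; split=> //; by rewrite ?eqA ?eqB // -?eqA -?eqB.
Qed.

Lemma set_prodA A B C : set_prod (set_prod A B) C =i set_prod A (set_prod B C).
Proof.
move=> w; apply/idP/idP => /mem_set_prod [x [y [Hx Hy ->]]].
- case/mem_set_prod: Hx => u [v [Hu Hv ->]]; apply/mem_set_prod.
  exists u, (v ++ y); rewrite catA; split=> //; apply/mem_set_prod; by exists v, y.
- case/mem_set_prod: Hy => u [v [Hu Hv ->]]; apply/mem_set_prod.
  exists (x ++ u), v; rewrite catA; split=> //; apply/mem_set_prod; by exists x, u.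
Qed.

Lemma set_prod1s A : set_prod [:: [::]] A =i A.
Proof.
move=> w; apply/idP/idP; last by move=> Hw; apply/mem_set_prod; exists [::], w.
by case/mem_set_prod => u [v []]; rewrite inE => /eqP -> Hv ->.
Qed.

Lemma set_prods1 A : set_prod A [:: [::]] =i A.
Proof.
move=> w; apply/idP/idP; last first.
  by move=> Hw; apply/mem_set_prod; exists w, [::]; rewrite cats0 inE.
by case/mem_set_prod => u [v [Hu]]; rewrite inE => /eqP -> ->; rewrite cats0.
Qed.

Lemma subst_word_cat phi u v :
  subst_word phi (u ++ v) =i set_prod (subst_word phi u) (subst_word phi v).
Proof.
elim: u => [|a u IH] w /=; first by rewrite set_prod1s.
by rewrite set_prodA; apply: eq_set_prod.
Qed.

Lemma mem_subst_set phi A w :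
  (w \in subst_set phi A) <-> exists2 u, u \in A & w \in subst_word phi u.
Proof.
split; first by case/flattenP => s /mapP [u Hu ->] Hw; exists u.
by case=> u Hu Hw; apply/flattenP; exists (subst_word phi u); rewrite ?map_f.
Qed.

Lemma eq_subst_set phi A A' : A =i A' -> subst_set phi A =i subst_set phi A'.
Proof.
move=> eqA w; apply/idP/idP => /mem_subst_set [u Hu Hw];
  apply/mem_subst_set; exists u => //; by rewrite ?eqA // -?eqA.
Qed.

Lemma subst_set_prod phi A B :
  subst_set phi (set_prod A B) =i set_prod (subst_set phi A) (subst_set phi B).
Proof.
move=> w; apply/idP/idP.
- case/mem_subst_set => _ /mem_set_prod [u [v [Hu Hv ->]]].
  rewrite subst_word_cat => /mem_set_prod [y [z [Hy Hz ->]]].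
  by apply/mem_set_prod; exists y, z; split=> //; apply/mem_subst_set; eauto.
- case/mem_set_prod => y [z [/mem_subst_set [u Hu Hy] /mem_subst_set [v Hv Hz] ->]].
  apply/mem_subst_set; exists (u ++ v); first by apply/mem_set_prod; exists u, v.
  by rewrite subst_word_cat; apply/mem_set_prod; exists y, z.
Qed.

Lemma subst_set_word theta phi v :
  subst_set theta (subst_word phi v) =i
  subst_word (fun b => subst_set theta (phi b)) v.
Proof.
elim: v => [|a v IH] w /=; first by rewrite /subst_set /= ?cats0.
by rewrite subst_set_prod; apply: eq_set_prod.
Qed.

Lemma subst_set_comp theta phi A :
  subst_set theta (subst_set phi A) =i
  subst_set (fun b => subst_set theta (phi b)) A.
Proof.
move=> w; apply/idP/idP.
- case/mem_subst_set => x /mem_subst_set [u Hu Hx] Hw.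
  apply/mem_subst_set; exists u; rewrite // -subst_set_word.
  by apply/mem_subst_set; exists x.
- case/mem_subst_set => u Hu; rewrite -subst_set_word => /mem_subst_set [x Hx Hw].
  by apply/mem_subst_set; exists x => //; apply/mem_subst_set; exists u.
Qed.

Lemma subst_word_unit v : subst_word (fun b : 'I_n => [:: [:: b]]) v =i [:: v].
Proof.
elim: v => [|a v IH] //= w; apply/idP/idP.
- case/mem_set_prod => x [y []]; rewrite inE => /eqP ->.
  by rewrite IH inE => /eqP -> ->; rewrite inE.
- by rewrite inE => /eqP ->; apply/mem_set_prod; exists [:: a], v; rewrite IH !inE.
Qed.

Lemma subst_set_unit A : subst_set (fun b : 'I_n => [:: [:: b]]) A =i A.
Proof.
move=> w; apply/idP/idP.
- by case/mem_subst_set => u Hu; rewrite subst_word_unit inE => /eqP ->.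
- by move=> Hw; apply/mem_subst_set; exists w; rewrite ?subst_word_unit ?inE.
Qed.

Lemma iter_subst_set theta k A :
  iter k (subst_set theta) A =i subst_set (subst_pow theta k) A.
Proof.
elim: k => [|k IH] w /=; first by rewrite subst_set_unit.
by rewrite (eq_subst_set _ IH) subst_set_comp.
Qed.

Lemma subst_powD theta k p a :
  subst_pow theta (k + p) a =i subst_set (subst_pow theta k) (subst_pow theta p a).
Proof. by rewrite /subst_pow iterD; apply: iter_subst_set. Qed.

Lemma subst_word_nonempty phi v :
  (forall b, exists x, x \in phi b) -> exists w, w \in subst_word phi v.
Proof.
move=> phi_ne; elim: v => [|a v [y Hy]] /=; first by exists [::]; rewrite inE.
by have [x Hx] := phi_ne a; exists (x ++ y); apply/mem_set_prod; exists x, y.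
Qed.

Lemma subst_pow_nonempty theta :
  is_random_substitution theta -> forall p b, exists w, w \in subst_pow theta p b.
Proof.
move=> Htheta; elim=> [|p IH] b; first by exists [:: b]; rewrite inE.
have [w Hw] := IH b.
have [y Hy] : exists y, y \in subst_word theta w.
  apply: subst_word_nonempty => c; have [] := Htheta c.
  by case: (theta c) => [|x s] // _ _; exists x; rewrite mem_head.
by exists y; apply/mem_subst_set; exists w.
Qed.

End WordSets.

Section Distinct.
Variable T : eqType.
Implicit Types A B : seq T.

Definition ndistinct A := size (undup A).

Lemma ndistinct_sub A B : {subset A <= B} -> ndistinct A <= ndistinct B.
Proof.
move=> sAB; apply: uniq_leq_size (undup_uniq A) _ => x.
by rewrite !mem_undup; apply: sAB.
Qed.

Lemma eq_ndistinct A B : A =i B -> ndistinct A = ndistinct B.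
Proof.
by move=> eqAB; apply/eqP; rewrite eqn_leq !ndistinct_sub // => x; rewrite eqAB.
Qed.

Lemma ndistinct_gt0 A x : x \in A -> 0 < ndistinct A.
Proof. by rewrite -mem_undup /ndistinct; case: (undup A). Qed.

Lemma ndistinct_cat A B : ndistinct (A ++ B) <= ndistinct A + ndistinct B.
Proof.
by rewrite /ndistinct undup_cat size_cat leq_add2r size_filter count_size.
Qed.

End Distinct.

Lemma ndistinct_flatten_map (T U : eqType) (f : U -> seq T) (A : seq U) X :
  (forall u, u \in A -> ndistinct (f u) <= X) ->
  ndistinct (flatten (map f A)) <= ndistinct A * X.
Proof.
move=> fX; rewrite (@eq_ndistinct _ _ (flatten (map f (undup A)))); last first.
  move=> w; apply/flattenP/flattenP => -[_ /mapP [u Hu ->] Hw];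
    by exists (f u) => //; apply: map_f; rewrite ?mem_undup // -mem_undup.
rewrite [ndistinct A]/ndistinct.
have: {subset undup A <= A} by move=> x; rewrite mem_undup.
elim: (undup A) => [|x s IH] sA //=.
apply: leq_trans (ndistinct_cat _ _) _; rewrite mulSn leq_add ?fX ?sA ?mem_head //.
by apply: IH => y Hy; rewrite sA // inE Hy orbT.
Qed.

Section Words.
Variable n : nat.
Implicit Types (A B : seq (word n)) (phi : rsubst n) (v w : word n).

Lemma ndistinct_set_prod A B :
  {in A &, forall u1 u2, size u1 = size u2} ->
  ndistinct (set_prod A B) = ndistinct A * ndistinct B.
Proof.
move=> sizeA; rewrite (@eq_ndistinct _ _ (set_prod (undup A) (undup B))); last first.
  by apply: eq_set_prod => x; rewrite mem_undup.
rewrite /ndistinct undup_id ?size_allpairs //.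
apply: allpairs_uniq; rewrite ?undup_uniq // => -[x1 y1] [x2 y2].
move=> /allpairsP [[u1 v1] /= [Hu1 Hv1 [-> ->]]].
move=> /allpairsP [[u2 v2] /= [Hu2 Hv2 [-> ->]]].
rewrite /= => /eqP; rewrite eqseq_cat; last by apply: sizeA; rewrite -mem_undup.
by case/andP => /eqP -> /eqP ->.
Qed.

Lemma ndistinct_subst_word phi v :
  (forall b, {in phi b &, forall u1 u2, size u1 = size u2}) ->
  ndistinct (subst_word phi v) = \prod_(b <- v) ndistinct (phi b).
Proof.
move=> sizephi; elim: v => [|a v IH] /=; first by rewrite big_nil.
by rewrite big_cons ndistinct_set_prod ?IH.
Qed.

Lemma count_subst_word phi (g : 'I_n -> 'I_n -> nat) v w :
  (forall b x, x \in phi b -> forall l, count_mem l x = g l b) ->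
  w \in subst_word phi v ->
  forall i, count_mem i w = \sum_(l < n) g i l * count_mem l v.
Proof.
move=> count_phi; elim: v w => [|a v IH] w /=.
  by rewrite inE => /eqP -> i; rewrite big1 // => l _; rewrite muln0.
case/mem_set_prod => x [y [Hx Hy ->]] i.
rewrite count_cat (count_phi _ _ Hx) (IH _ Hy).
under [in RHS]eq_bigr => l _ do rewrite mulnDr.
rewrite big_split /=; congr (_ + _).
rewrite (bigD1 a) //= eqxx muln1 big1 ?addn0 // => l.
by rewrite eq_sym => /negbTE ->; rewrite muln0.
Qed.

Lemma prodn_count_mem (F : 'I_n -> nat) v :
  \prod_(b <- v) F b = \prod_(i < n) F i ^ count_mem i v.
Proof.
elim: v => [|a v IH]; first by rewrite big_nil big1.
rewrite big_cons IH /=; under [in RHS]eq_bigr => i _ do rewrite expnD.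
rewrite big_split /=; congr (_ * _).
rewrite (bigD1 a) //= eqxx big1 ?muln1 // => i.
by rewrite eq_sym => /negbTE ->.
Qed.

End Words.

Section SemiCompatible.
Variables (n : nat) (theta : rsubst n).
Hypothesis Htheta : is_random_substitution theta.
Hypothesis Hsc : semi_compatible theta.

Lemma count_subst_pow p b w : w \in subst_pow theta p b ->
  forall i, count_mem i w = nmat_pow (subst_matrix theta) p i b.
Proof.
elim: p b w => [|p IH] b w.
  by rewrite inE => /eqP -> i /=; rewrite /nmat_id addn0 eq_sym.
(* Peel off the first application of theta, so that the matrix product comes
   out as M^p * M, the order in which nmat_pow is defined. *)
rewrite /subst_pow iterSr iter_subst_set => /mem_subst_set [u Hu Hw] i.
rewrite (count_subst_word IH Hw); apply: eq_bigr => l _; congr (_ * _).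
have {}Hu : u \in theta b.
  by case/mem_subst_set: Hu => _ /[!inE] /eqP -> /=; rewrite set_prods1.
have [+ _] := Htheta b; rewrite /subst_matrix /abel.
by case E: (theta b) => [|x s] // _; apply: (Hsc Hu); rewrite E mem_head.
Qed.

Lemma size_subst_pow p b : {in subst_pow theta p b &, forall x y, size x = size y}.
Proof.
(* perm_eq is literally the equality of all letter counts. *)
move=> x y Hx Hy; apply: perm_size; apply/allP => l _ /=.
by rewrite (count_subst_pow Hx) (count_subst_pow Hy).
Qed.

Lemma card_pow_gt0 p b : 0 < card_pow theta p b.
Proof. by have [w Hw] := subst_pow_nonempty Htheta p b; apply: ndistinct_gt0 Hw. Qed.

Definition card_weight k p j :=
  \prod_(i < n) card_pow theta k i ^ nmat_pow (subst_matrix theta) p i j.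

Lemma ndistinct_subst_word_pow k p j v : v \in subst_pow theta p j ->
  ndistinct (subst_word (subst_pow theta k) v) = card_weight k p j.
Proof.
move=> Hv; rewrite ndistinct_subst_word; last exact: size_subst_pow.
by rewrite prodn_count_mem; apply: eq_bigr => i _; rewrite (count_subst_pow Hv).
Qed.

Lemma card_pow_bounds k p j :
  card_weight k p j <= card_pow theta (k + p) j
                    <= card_pow theta p j * card_weight k p j.
Proof.
have split_m : card_pow theta (k + p) j =
    ndistinct (subst_set (subst_pow theta k) (subst_pow theta p j)).
  exact/eq_ndistinct/subst_powD.
have [v0 Hv0] := subst_pow_nonempty Htheta p j.
rewrite split_m; apply/andP; split.
  rewrite -(ndistinct_subst_word_pow k Hv0); apply: ndistinct_sub => w Hw.
  by apply/mem_subst_set; exists v0.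
by apply: ndistinct_flatten_map => v Hv; rewrite (ndistinct_subst_word_pow k Hv).
Qed.

End SemiCompatible.

Lemma INR_gt0 k : 0 < k -> Rlt R0 (INR k).
Proof. by move/ltP; apply: lt_0_INR. Qed.

Lemma ln_INR_le a b : 0 < a -> a <= b -> Rle (ln (INR a)) (ln (INR b)).
Proof.
move=> a_gt0; rewrite leq_eqVlt => /predU1P [-> | ltab]; first exact: Rle_refl.
by apply/Rlt_le/ln_increasing; [apply: INR_gt0 | apply/lt_INR/ltP].
Qed.

Lemma ln_INR_muln a b : 0 < a -> 0 < b ->
  ln (INR (a * b)) = Rplus (ln (INR a)) (ln (INR b)).
Proof. by move=> a_gt0 b_gt0; rewrite -multE mult_INR ln_mult //; apply: INR_gt0. Qed.

Lemma ln_INR_expn a e : 0 < a -> ln (INR (a ^ e)) = Rmult (ln (INR a)) (INR e).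
Proof.
move=> a_gt0; have -> : a ^ e = Nat.pow a e by elim: e => // e IH; rewrite expnS IH.
by rewrite pow_INR ln_pow; [apply: Rmult_comm | apply: INR_gt0].
Qed.

Lemma ln_prodn_expn n (c e : 'I_n -> nat) : (forall i, 0 < c i) ->
  ln (INR (\prod_(i < n) c i ^ e i)) =
  \big[Rplus/R0]_(i < n) Rmult (ln (INR (c i))) (INR (e i)).
Proof.
move=> c_gt0; pose K x y := 0 < x /\ ln (INR x) = y.
suff [] : K (\prod_(i < n) c i ^ e i)
            (\big[Rplus/R0]_(i < n) Rmult (ln (INR (c i))) (INR (e i))) by [].
apply: big_rec2 => [|i x y _ [x_gt0 <-]]; first by split=> //; rewrite ln_1.
have ce_gt0 : 0 < c i ^ e i by rewrite expn_gt0 c_gt0.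
by rewrite /K muln_gt0 ce_gt0 ln_INR_muln // ln_INR_expn.
Qed.

Theorem mainTheorem2 (n : nat) (theta : rsubst n)
  (Htheta : is_random_substitution theta)
  (Hsc : semi_compatible theta) :
  forall k m : nat, (1 <= k)%N -> (k < m)%N ->
  forall j : 'I_n,
    (Rle (qM theta k (m - k) j) (q theta m j)
     /\ Rle (q theta m j) (Rplus (qM theta k (m - k) j) (q theta (m - k) j))).
Proof.
(* The bounds hold for k = 0 as well. *)
move=> k m _ /ltnW/subnKC m_eq j; set p := m - k in m_eq *.
have card_gt0 := card_pow_gt0 Htheta.
have weight_gt0 : 0 < card_weight theta k p j.
  by apply: prodn_gt0 => i; rewrite expn_gt0 card_gt0.
have -> : qM theta k p j = ln (INR (card_weight theta k p j)).
  by rewrite ln_prodn_expn.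
have /andP [lb ub] := card_pow_bounds Htheta Hsc k p j; rewrite m_eq in lb ub.
split; first exact: ln_INR_le lb.
by rewrite Rplus_comm /q -ln_INR_muln //; apply: ln_INR_le ub.
Qed.
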